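(* Let $(\mathscr{A},\star')$ be a left-non-degenerate weak RC-system on a quiver $\mathscr{A}$ over $\Lambda$. For composable $a|b$ define $a\rightharpoonup b:=c$ where $c$ is the unique arrow with $b=a\star' c$, and $a\leftharpoonup b:=(a\rightharpoonup b)\star' a$. Then $\sigma\colon a|b\mapsto(a\rightharpoonup b)|(a\leftharpoonup b)$ is a quiver-theoretic Yang--Baxter map on $\mathscr{A}$.
   Context: A weak RC-system $(Q,\star)$ is a quiver with a partial binary operation such that: $x\star y$ is defined only if $\mathfrak{s}(x)=\mathfrak{s}(y)$; whenever $x\star y$ is defined, $y\star x$ is defined, $\mathfrak{s}(x\star y)=\mathfrak{t}(x)$, $\mathfrak{s}(y\star x)=\mathfrak{t}(y)$, $\mathfrak{t}(x\star y)=\mathfrak{t}(y\star x)$; and whenever $x\star y$, $x\star z$, $(x\star y)\star(x\star z)$ are defined, $y\star z$ and $(y\star x)\star(y\star z)$ are defined and $(x\star y)\star(x\star z)=(y\star x)\star(y\star z)$. It is left-non-degenerate if each map $x\star\cdot\colon Q(\mathfrak{s}(x),\Lambda)\to Q(\mathfrak{t}(x),\Lambda)$ is a bijection ($Q(\lambda,\Lambda)$ = arrows with source $\lambda$). A quiver-theoretic Yang--Baxter map is a map $\sigma$ on the set of composable pairs $a|b$ ($\mathfrak{t}(a)=\mathfrak{s}(b)$) preserving the source of the first and target of the second arrow, satisfying $(\sigma\otimes\mathrm{id})(\mathrm{id}\otimes\sigma)(\sigma\otimes\mathrm{id})=(\mathrm{id}\otimes\sigma)(\sigma\otimes\mathrm{id})(\mathrm{id}\otimes\sigma)$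 on composable triples. *)

From Stdlib Require Import ClassicalEpsilon.

Set Implicit Arguments.

Section Quiver.
(* A quiver over the vertex set V (= Lambda): arrows A with source s and target t.
   The partial binary operation star is encoded as  star : A -> A -> option A
   (x * y defined iff star x y = Some _). *)
Variables (V A : Type) (s t : A -> V) (star : A -> A -> option A).

Definition defined (x y : A) : Prop := exists z, star x y = Some z.

Definition weak_RC_system : Prop :=
  (forall x y, defined x y -> s x = s y) /\
  (forall x y xy, star x y = Some xy ->
     exists yx, star y x = Some yx /\ s xy = t x /\ s yx = t y /\ t xy = t yx) /\
  (forall x y z xy xz u,
     star x y = Some xy -> star x z = Some xz -> star xy xz = Some u ->
     exists yx yz, star y x = Some yx /\ star y z = Some yz /\ star yx yz = Some u).

Definition left_non_degenerate : Prop :=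
  forall x,
    (forall y, s y = s x -> exists z, star x y = Some z /\ s z = t x) /\
    (forall y1 y2 z, s y1 = s x -> s y2 = s x ->
        star x y1 = Some z -> star x y2 = Some z -> y1 = y2) /\
    (forall z, s z = t x -> exists y, s y = s x /\ star x y = Some z).

Definition rharp (a b : A) : A :=
  epsilon (inhabits a) (fun c => s c = s a /\ star a c = Some b).

(* a <- b := (a -> b) * a  (default value a if undefined; irrelevant on composable pairs) *)
Definition lharp (a b : A) : A :=
  match star (rharp a b) a with Some d => d | None => a end.

Definition sigma_RC (p : A * A) : A * A :=
  (rharp (fst p) (snd p), lharp (fst p) (snd p)).

Definition composable (a b : A) : Prop := t a = s b.

Definition sig12 (sg : A * A -> A * A) (x : A * A * A) : A * A * A :=
  let '(a, b, c) := x in let '(a', b') := sg (a, b) in (a', b', c).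
Definition sig23 (sg : A * A -> A * A) (x : A * A * A) : A * A * A :=
  let '(a, b, c) := x in let '(b', c') := sg (b, c) in (a, b', c').

Definition quiver_YB_map (sg : A * A -> A * A) : Prop :=
  (forall a b, composable a b ->
     composable (fst (sg (a, b))) (snd (sg (a, b))) /\
     s (fst (sg (a, b))) = s a /\ t (snd (sg (a, b))) = t b) /\
  (forall a b c, composable a b -> composable b c ->
     sig12 sg (sig23 sg (sig12 sg (a, b, c))) =
     sig23 sg (sig12 sg (sig23 sg (a, b, c)))).
End Quiver.

(* On arrows with a common source, left-non-degeneracy lets one write every composable pair as
   a|a*u and every composable triple as a|a*u|(a*u)*(a*w) with a, u, w all starting at the same
   vertex; on such pairs sigma is simply a|a*u |-> u|u*a.  Both sides of the braid relation then
   evaluate to w|w*u|(w*u)*(w*a), after using the cycloid equation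
   (x*y)*(x*z) = (y*x)*(y*z) three times. *)
From Stdlib Require Import ClassicalEpsilon.

Set Implicit Arguments.
Unset Strict Implicit.

Section WeakRCSystem.
Variables (V A : Type) (s t : A -> V) (star : A -> A -> option A).
Hypothesis RC : weak_RC_system s t star.
Hypothesis LND : left_non_degenerate s t star.

(* The default [x] is junk: [star x y] is defined as soon as [s y = s x] (lemma [star_tstar]). *)
Definition tstar (x y : A) : A :=
  match star x y with Some z => z | None => x end.

Lemma star_tstar x y : s y = s x -> star x y = Some (tstar x y).
Proof.
  intros Hyx; destruct (proj1 (LND x) y Hyx) as [z [E _]].
  unfold tstar; rewrite E; reflexivity.
Qed.

Lemma tstar_star x y z : star x y = Some z -> tstar x y = z.
Proof. intros E; unfold tstar; rewrite E; reflexivity. Qed.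

Lemma source_tstar x y : s y = s x -> s (tstar x y) = t x.
Proof.
  intros Hyx; destruct RC as [_ [Hsym _]].
  destruct (Hsym _ _ _ (star_tstar Hyx)) as [yx [_ [Hs _]]]; exact Hs.
Qed.

Lemma target_tstarC x y : s y = s x -> t (tstar x y) = t (tstar y x).
Proof.
  intros Hyx; destruct RC as [_ [Hsym _]].
  destruct (Hsym _ _ _ (star_tstar Hyx)) as [yx [Eyx [_ [_ Ht]]]].
  rewrite (tstar_star Eyx); exact Ht.
Qed.

Lemma tstar_cycloid x y z : s y = s x -> s z = s x ->
  tstar (tstar x y) (tstar x z) = tstar (tstar y x) (tstar y z).
Proof.
  intros Hyx Hzx; destruct RC as [_ [_ Hcyc]].
  assert (Hxyz : s (tstar x z) = s (tstar x y))
    by (rewrite !source_tstar; auto).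
  destruct (Hcyc _ _ _ _ _ _ (star_tstar Hyx) (star_tstar Hzx) (star_tstar Hxyz))
    as [yx [yz [Eyx [Eyz E]]]].
  rewrite <- (tstar_star Eyx), <- (tstar_star Eyz) in E.
  symmetry; exact (tstar_star E).
Qed.

Lemma tstar_inj x y1 y2 : s y1 = s x -> s y2 = s x -> tstar x y1 = tstar x y2 -> y1 = y2.
Proof.
  intros H1 H2 E; apply (proj1 (proj2 (LND x)) y1 y2 (tstar x y1)); auto.
  - apply star_tstar; exact H1.
  - rewrite E; apply star_tstar; exact H2.
Qed.

Lemma tstar_surj x z : s z = t x -> exists y, s y = s x /\ tstar x y = z.
Proof.
  intros Hz; destruct (proj2 (proj2 (LND x)) z Hz) as [y [Hy E]].
  exists y; split; [exact Hy | exact (tstar_star E)].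
Qed.

Lemma rharp_tstar x y : s y = s x -> rharp s star x (tstar x y) = y.
Proof.
  intros Hyx; unfold rharp.
  destruct (epsilon_spec (inhabits x)
              (fun c => s c = s x /\ star x c = Some (tstar x y))) as [Hc Ec].
  - exists y; split; [exact Hyx | apply star_tstar; exact Hyx].
  - apply (tstar_inj Hc Hyx); exact (tstar_star Ec).
Qed.

Lemma sigma_RC_tstar x y : s y = s x ->
  sigma_RC s star (x, tstar x y) = (y, tstar y x).
Proof.
  intros Hyx; unfold sigma_RC, lharp; simpl.
  rewrite (rharp_tstar Hyx), (star_tstar (eq_sym Hyx)); reflexivity.
Qed.

Lemma composable_pair_tstar a b : composable s t a b ->
  exists u, s u = s a /\ b = tstar a u.
Proof.
  intros Hab; destruct (tstar_surj (eq_sym Hab)) as [u [Hu E]].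
  exists u; split; [exact Hu | symmetry; exact E].
Qed.

Lemma composable_triple_tstar a b c : composable s t a b -> composable s t b c ->
  exists u w, s u = s a /\ s w = s a /\
    b = tstar a u /\ c = tstar (tstar a u) (tstar a w).
Proof.
  intros Hab Hbc.
  destruct (composable_pair_tstar Hab) as [u [Hu ->]].
  destruct (tstar_surj (eq_sym Hbc)) as [z [Hz <-]].
  rewrite (source_tstar Hu) in Hz.
  destruct (tstar_surj Hz) as [w [Hw <-]].
  exists u, w; auto.
Qed.

Lemma sigma_RC_tstar_endpoints x y : s y = s x ->
  composable s t y (tstar y x) /\ s y = s x /\ t (tstar y x) = t (tstar x y).
Proof.
  intros Hyx; split; [|split]; auto.
  - unfold composable; rewrite source_tstar; auto.
  - symmetry; apply target_tstarC; exact Hyx.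
Qed.

Lemma sigma_RC_braid a u w : s u = s a -> s w = s a ->
  let abc := (a, tstar a u, tstar (tstar a u) (tstar a w)) in
  sig12 (sigma_RC s star) (sig23 (sigma_RC s star) (sig12 (sigma_RC s star) abc)) =
  sig23 (sigma_RC s star) (sig12 (sigma_RC s star) (sig23 (sigma_RC s star) abc)).
Proof.
  intros Hu Hw abc.
  assert (Hwu : s w = s u) by congruence.
  assert (Hau : s a = s u) by congruence.
  transitivity (w, tstar w u, tstar (tstar w u) (tstar w a));
    unfold abc, sig12, sig23.
  - rewrite (sigma_RC_tstar Hu); cbn -[sigma_RC].
    rewrite (tstar_cycloid Hu Hw).
    rewrite (sigma_RC_tstar (x := tstar u a) (y := tstar u w))
      by (rewrite !source_tstar; congruence); cbn -[sigma_RC].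
    rewrite (sigma_RC_tstar Hwu); cbn -[sigma_RC].
    rewrite (tstar_cycloid Hwu Hau); reflexivity.
  - rewrite (sigma_RC_tstar (x := tstar a u) (y := tstar a w))
      by (rewrite !source_tstar; congruence); cbn -[sigma_RC].
    rewrite (sigma_RC_tstar Hw); cbn -[sigma_RC].
    rewrite (tstar_cycloid Hw Hu).
    rewrite (sigma_RC_tstar (x := tstar w a) (y := tstar w u))
      by (rewrite !source_tstar; congruence); cbn -[sigma_RC].
    reflexivity.
Qed.

End WeakRCSystem.

Theorem proposition6p4 (V A : Type) (s t : A -> V) (star : A -> A -> option A) :
  weak_RC_system s t star ->
  left_non_degenerate s t star ->
  quiver_YB_map s t (sigma_RC s star).
Proof.
  intros RC LND; split.
  - intros a b Hab.
    destruct (composable_pair_tstar LND Hab) as [u [Hu ->]].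
    rewrite (sigma_RC_tstar LND Hu); simpl.
    exact (sigma_RC_tstar_endpoints RC LND Hu).
  - intros a b c Hab Hbc.
    destruct (composable_triple_tstar RC LND Hab Hbc) as [u [w [Hu [Hw [-> ->]]]]].
    exact (sigma_RC_braid RC LND Hu Hw).
Qed.
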